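(* The cometric $g^{ij}(u):=\sum_{k,l}g^{kl}(p)\frac{\partial u_i}{\partial p_k}\frac{\partial u_j}{\partial p_l}$, where $g^{kl}(p)=\frac{1-\delta^{kl}}{p_kp_l}$, can be written in terms of the invariant polynomials $u_1,\dots,u_n$ and is well defined on the quotient $\mathbb{C}^n/B_n$. Moreover, for each $i,j$, $g^{ij}(u)$ is a homogeneous polynomial in the $p$-variables of degree $2i+2j-4$, which depends at most linearly on $u_{n-1}$. In particular $g^{11}(u)=4(n^2-n)$.
   Context: $n\ge2$. $B_n$ acts on $\mathbb{C}^n$ (coordinates $p_1,\dots,p_n$) by permutations and sign changes of coordinates. $u_k=\sum_{1\le i_1<\dots<i_k\le n}p_{i_1}^2\cdots p_{i_k}^2$ for $k=1,\dots,n$ (elementary symmetric polynomials in $p_1^2,\dots,p_n^2$), a set of basic invariants; $u_k$ is homogeneous of degree $2k$ in $p$. *)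

From HB Require Import structures.
From mathcomp Require Import all_boot all_order all_algebra all_field.
From mathcomp Require Import mpoly.
Set Implicit Arguments. Unset Strict Implicit. Unset Printing Implicit Defensive.
Import Order.TTheory GRing.Theory Num.Theory.
Local Open Scope ring_scope.

(* Coordinate polynomials p_1..p_n are 'X_0 .. 'X_(n-1). *)
(* Basic invariants u_k = e_k(p_1^2, ..., p_n^2), k : nat (used for 1 <= k <= n). *)
Definition sq_tuple (n : nat) : n.-tuple {mpoly algC[n]} :=
  [tuple 'X_i ^+ 2 | i < n].

Definition uinv (n k : nat) : {mpoly algC[n]} :=
  (mesym n algC k) \mPo (sq_tuple n).

(* The tuple (u_1, ..., u_n): entry m is u_(m+1). *)
Definition u_tuple (n : nat) : n.-tuple {mpoly algC[n]} :=
  [tuple uinv n (val m).+1 | m < n].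

Definition gflat (n : nat) (p : 'I_n -> algC) (k l : 'I_n) : algC :=
  (if k == l then 0 else 1) / (p k * p l).

Definition gcomet (n i j : nat) (p : 'I_n -> algC) : algC :=
  \sum_(k < n) \sum_(l < n)
     gflat p k l * (mderiv k (uinv n i)).@[p] * (mderiv l (uinv n j)).@[p].

From HB Require Import structures.
From mathcomp Require Import all_boot all_order all_algebra all_field.
From mathcomp Require Import mpoly.
From mathcomp Require Import ring zify.
Import Order.TTheory GRing.Theory Num.Theory.
Local Open Scope ring_scope.
Set Implicit Arguments. Unset Strict Implicit. Unset Printing Implicit Defensive.

(* Put x_k = p_k^2, let e_c be the elementary symmetric functions of the x_k
   (so u_c = e_c) and E_k(c) those of the x_l with l <> k.  Since
   d u_(c+1) / d p_k = 2 p_k E_k(c), the factor 1 / (p_k p_l) of the flat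
   cometric cancels and g^(a+1,b+1) = 4 sum_(k <> l) E_k(a) E_l(b).  The
   identities sum_k E_k(c) = (n - c) e_c and E_k(c+1) = e_(c+1) - x_k E_k(c)
   give a recursion in b for the diagonal part sum_k E_k(a) E_k(b), whose
   solution expresses g^(a+1,b+1) as an integer combination of products
   u_c u_c' with c + c' = a + b (u_0 = 1).  This gives homogeneity, and
   u_(n-1) can only occur squared in the term u_a u_b with a = b = n - 1,
   whose coefficient (n - a) (n - b - 1) vanishes. *)

Lemma big_card_mem_setU1 (R : Type) (idx : R) (op : Monoid.com_law idx)
    (T : finType) (F : {set T} -> R) (k : T) (c : nat) :
  \big[op/idx]_(h : {set T} | (#|h| == c.+1) && (k \in h)) F h =
  \big[op/idx]_(h : {set T} | (#|h| == c) && (k \notin h)) F (k |: h).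
Proof.
rewrite (reindex_onto (fun h => k |: h) (fun h => h :\ k)) /=; last first.
  by move=> h /andP[_ kh]; rewrite setD1K.
apply: eq_bigl => h; case: (boolP (k \in h)) => kh /=.
  rewrite andbF; apply/negbTE/negP => /andP[_ /eqP E].
  by have := setD11 k (k |: h); rewrite E kh.
by rewrite setU1K // eqxx setU11 cardsU1 kh andbT.
Qed.

(* The polynomial expressing g^(a+1,b+1) in the variables e c standing for
   u_c; it is the closed form of 4 sum_(k <> l) E_k(a) E_l(b). *)
Definition cometric_form (R : pzRingType) (n : nat) (e : nat -> R) (a b : nat) : R :=
  (e a * e b *~ ((n%:Z - a%:Z) * (n%:Z - b%:Z - 1))
   - \sum_(m < b) e (a + m.+1)%N * e (b - m.+1)%N *~ (b%:Z - a%:Z - 2 * m.+1%:Z)) *+ 4.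

Lemma eq_cometric_form (R : pzRingType) n (e e' : nat -> R) a b :
  e =1 e' -> cometric_form n e a b = cometric_form n e' a b.
Proof.
by move=> ee'; rewrite /cometric_form !ee'; under eq_bigr do rewrite !ee'.
Qed.

Lemma rmorph_cometric_form (R S : pzRingType) (f : {rmorphism R -> S}) n e a b :
  f (cometric_form n e a b) = cometric_form n (f \o e) a b.
Proof.
rewrite /cometric_form rmorphMn rmorphB rmorphMz rmorphM rmorph_sum /=.
by under eq_bigr do rewrite rmorphMz rmorphM.
Qed.

Lemma dhomog_prod_const (R : nzRingType) n (T : Type) d (s : seq T)
    (F : T -> {mpoly R[n]}) :
  (forall i, F i \is d.-homog) -> \prod_(i <- s) F i \is (d * size s).-homog.
Proof.
move=> Fd; elim: s => [|i s IH]; first by rewrite big_nil muln0 dhomog1.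
by rewrite big_cons mulnS; apply: dhomogM.
Qed.

Lemma cometric_form_homog (R : nzRingType) k n (e : nat -> {mpoly R[k]}) d a b :
  (forall c, e c \is (d * c).-homog) -> cometric_form n e a b \is (d * (a + b)).-homog.
Proof.
move=> ed; apply/rpredMn/rpredB; first by apply/rpredMz; rewrite mulnDr dhomogM.
apply: rpred_sum => m _; apply: rpredMz.
have -> : (a + b = (a + m.+1) + (b - m.+1))%N by have := ltn_ord m; lia.
by rewrite mulnDr dhomogM.
Qed.

Section ElementarySymmetric.
Variables (R : comPzRingType) (n : nat) (x : 'I_n -> R).

Definition esym (c : nat) : R :=
  \sum_(h : {set 'I_n} | #|h| == c) \prod_(i in h) x i.

Definition esym_omit (k : 'I_n) (c : nat) : R :=
  \sum_(h : {set 'I_n} | (#|h| == c) && (k \notin h)) \prod_(i in h) x i.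

Lemma esym0 : esym 0 = 1.
Proof.
rewrite /esym (bigD1 set0) ?cards0 //= big_set0 big1 ?addr0 // => h.
by rewrite -cards_eq0 => /andP[/eqP-> ].
Qed.

Lemma esym_omit0 k : esym_omit k 0 = 1.
Proof.
rewrite /esym_omit (bigD1 set0) ?cards0 ?in_set0 //= big_set0 big1 ?addr0 // => h.
by rewrite -cards_eq0 => /andP[/andP[/eqP-> _]].
Qed.

Lemma esym_omitS k c : esym_omit k c.+1 + x k * esym_omit k c = esym c.+1.
Proof.
rewrite /esym (bigID (fun h : {set 'I_n} => k \in h)) /= addrC.
congr (_ + _); rewrite big_card_mem_setU1 mulr_sumr.
by apply: eq_bigr => h /andP[_ kh]; rewrite big_setU1.
Qed.

Lemma sum_esym_omit c : \sum_k esym_omit k c = esym c *~ (n%:Z - c%:Z).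
Proof.
rewrite /esym_omit /esym.
under eq_bigr => k _ do rewrite big_mkcondr /=.
rewrite exchange_big /= mulrz_suml; apply: eq_bigr => h /eqP hc.
rewrite -big_mkcond /= sumr_const (@eq_card _ _ (~: h)) => [|k]; last by rewrite inE.
have c_le_n : (c <= n)%N by rewrite -hc -[X in (_ <= X)%N]card_ord max_card.
by rewrite cardsCs setCK card_ord hc subzn // pmulrn.
Qed.

Definition esym_omit_dot (a b : nat) : R := \sum_k esym_omit k a * esym_omit k b.

Lemma esym_omit_dot0 a : esym_omit_dot a 0 = esym a *~ (n%:Z - a%:Z).
Proof. by rewrite -sum_esym_omit; apply: eq_bigr => k _; rewrite esym_omit0 mulr1. Qed.

Lemma esym_omit_dotS a b : esym_omit_dot a b.+1 =
  esym a * esym b.+1 *~ (n%:Z - a%:Z) - esym a.+1 * esym b *~ (n%:Z - b%:Z)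
  + esym_omit_dot a.+1 b.
Proof.
rewrite /esym_omit_dot.
transitivity (\sum_k (esym b.+1 * esym_omit k a - esym a.+1 * esym_omit k b
                     + esym_omit k a.+1 * esym_omit k b)).
  by apply: eq_bigr => k _; rewrite -(esym_omitS k a) -(esym_omitS k b); ring.
by rewrite !big_split /= sumrN -!mulr_sumr !sum_esym_omit; ring.
Qed.

Lemma esym_omit_dotE a b : esym_omit_dot a b = esym a * esym b *~ (n%:Z - a%:Z) +
  \sum_(m < b) esym (a + m.+1)%N * esym (b - m.+1)%N *~ (b%:Z - a%:Z - 2 * m.+1%:Z).
Proof.
elim: b a => [|b IH] a; first by rewrite esym_omit_dot0 big_ord0 esym0 mulr1 addr0.
rewrite esym_omit_dotS IH big_ord_recl subSS subn0 addn1.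
have -> : \sum_(m < b) esym (a + (lift ord0 m).+1)%N * esym (b.+1 - (lift ord0 m).+1)%N
      *~ (b.+1%:Z - a%:Z - 2 * (lift ord0 m).+1%:Z) =
    \sum_(m < b) esym (a.+1 + m.+1)%N * esym (b - m.+1)%N *~ (b%:Z - a.+1%:Z - 2 * m.+1%:Z).
  apply: eq_bigr => m _; rewrite /= /bump /= add1n subSS addSnnS.
  by congr (_ *~ _); ring.
by rewrite /=; ring.
Qed.

Lemma esym_omit_offdiag a b :
  (\sum_k \sum_(l | l != k) esym_omit k a * esym_omit l b) *+ 4 = cometric_form n esym a b.
Proof.
have row k : \sum_(l | l != k) esym_omit k a * esym_omit l b =
    esym_omit k a * \sum_l esym_omit l b - esym_omit k a * esym_omit k b.
  by rewrite mulr_sumr [in RHS](bigD1 k) //= addrC addrK.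
rewrite (eq_bigr _ (fun k _ => row k)) sumrB -mulr_suml !sum_esym_omit.
by rewrite -/(esym_omit_dot a b) esym_omit_dotE /cometric_form; ring.
Qed.

End ElementarySymmetric.

Section PolynomialDerivatives.
Variables (R : comNzRingType) (n : nat).

Lemma mderivXU k i : mderiv k ('X_i : {mpoly R[n]}) = (i == k)%:R.
Proof.
rewrite mderivX mnm1E; case: eqP => [->|_]; last by rewrite scale0r.
by rewrite scale1r -{1}[U_(k)%MM]add0m addmK mpolyX0.
Qed.

Lemma mderiv_prod_sqX k (h : {set 'I_n}) : k \notin h ->
  mderiv k (\prod_(i in h) ('X_i : {mpoly R[n]}) ^+ 2) = 0.
Proof.
move=> kNh; apply: (big_ind (fun q => mderiv k q = 0)).
- by rewrite -mpolyC1 mderivC.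
- by move=> q q' dq dq'; rewrite mderivM dq dq' mul0r mulr0 addr0.
move=> i ih; have /negbTE ik : i != k by apply: contraNneq kNh => <-.
by rewrite expr2 mderivM mderivXU ik mul0r mulr0 addr0.
Qed.

End PolynomialDerivatives.

Section BasicInvariants.
Variable n : nat.
Implicit Types (p : 'I_n -> algC) (a b c : nat).

Lemma uinvE c : uinv n c = \sum_(h : {set 'I_n} | #|h| == c) \prod_(i in h) 'X_i ^+ 2.
Proof.
rewrite /uinv /mesym rmorph_sum; apply: eq_bigr => h _; rewrite rmorph_prod.
by apply: eq_bigr => i _; rewrite /= comp_mpolyXU /sq_tuple nth_mktuple.
Qed.

Lemma uinv_eval c p : (uinv n c).@[p] = esym (fun i => p i ^+ 2) c.
Proof.
rewrite uinvE rmorph_sum; apply: eq_bigr => h _; rewrite rmorph_prod.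
by apply: eq_bigr => i _; rewrite rmorphXn /= mevalXU.
Qed.

Lemma mderiv_uinv_eval k c p :
  (mderiv k (uinv n c.+1)).@[p] = 2 * p k * esym_omit (fun i => p i ^+ 2) k c.
Proof.
rewrite uinvE (bigID (fun h : {set 'I_n} => k \in h)) /= mderivD !raddf_sum /=.
rewrite [X in _ + X]big1 ?addr0 => [|h /andP[_]]; last exact: mderiv_prod_sqX.
rewrite big_card_mem_setU1 rmorph_sum mulr_sumr; apply: eq_bigr => h /andP[_ kNh].
rewrite big_setU1 //= mderivM mderiv_prod_sqX // mulr0 addr0 expr2 mderivM mderivXU eqxx.
rewrite mul1r mulr1 -mulr2n mevalM mevalMn mevalXU -mulr_natl rmorph_prod /=.
by under eq_bigr do rewrite rmorphXn /= mevalXU.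
Qed.

Lemma uinv_homog c : uinv n c \is (2 * c).-homog.
Proof.
rewrite uinvE; apply: rpred_sum => h /eqP <-; rewrite -big_enum cardE.
apply: dhomog_prod_const => i; rewrite -[2%N]mul1n; apply: dhomogMn.
by rewrite dhomogX; apply/eqP; apply: mdeg1.
Qed.

Lemma gcomet_offdiag a b p : (forall k, p k != 0) ->
  gcomet a.+1 b.+1 p = (\sum_k \sum_(l | l != k)
    esym_omit (fun i => p i ^+ 2) k a * esym_omit (fun i => p i ^+ 2) l b) *+ 4.
Proof.
move=> p_neq0; rewrite /gcomet -sumrMnl; apply: eq_bigr => k _.
rewrite (bigD1 k) //= /gflat eqxx !mul0r add0r -sumrMnl; apply: eq_bigr => l lk.
by rewrite !mderiv_uinv_eval eq_sym (negbTE lk); field; rewrite !p_neq0.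
Qed.

End BasicInvariants.

(* The variable standing for u_c, with the conventions u_0 = 1 and u_c = 0 for
   c > n. *)
Definition uvar {R : nzRingType} (n c : nat) : {mpoly R[n]} :=
  if c is c'.+1 then if insub c' is Some t then 'X_t else 0 else 1.

Lemma uvar_comp n c : uvar n c \mPo u_tuple n = uinv n c.
Proof.
case: c => [|c] /=; first by rewrite comp_mpoly1 /uinv mesym0E comp_mpoly1.
case: insubP => [t _ tc|]; first by rewrite comp_mpolyXU /u_tuple nth_mktuple tc.
by rewrite -leqNgt => n_le_c; rewrite comp_mpoly0 /uinv mesym_geqnE ?comp_mpoly0.
Qed.

Lemma uvar_eval n c (p : 'I_n -> algC) :
  (uvar n c).@[fun m : 'I_n => (uinv n (val m).+1).@[p]] = (uinv n c).@[p].
Proof.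
rewrite -uvar_comp comp_mpoly_meval; apply: meval_eq => i /=.
by rewrite tnth_mktuple.
Qed.

Section AtMostLinear.
Variables (R : nzRingType) (n : nat) (t : 'I_n).

Definition at_most_linear_pred : pred {mpoly R[n]} :=
  fun q => all (fun m : 'X_{1..n} => (m t <= 1)%N) (msupp q).
Definition at_most_linear_in : qualifier 0 {mpoly R[n]} :=
  [qualify q | at_most_linear_pred q].

Lemma at_most_linear_submod_closed : submod_closed at_most_linear_in.
Proof.
split=> [|c q q' /allP lin_q /allP lin_q']; first by rewrite qualifE /at_most_linear_pred msupp0.
apply/allP => m /msuppD_le; rewrite mem_cat => /orP[/msuppZ_le|]; [exact: lin_q | exact: lin_q'].
Qed.

HB.instance Definition _ := GRing.isSubmodClosed.Build R {mpoly R[n]}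
  at_most_linear_pred at_most_linear_submod_closed.

Lemma msupp_uvar c m :
  m \in msupp (uvar n c : {mpoly R[n]}) -> m t = (c == (val t).+1).
Proof.
case: c => [|c] /=; first by rewrite -mpolyX0 msuppX mem_seq1 => /eqP ->; rewrite mnm0E.
case: insubP => [s _ sc|_]; last by rewrite msupp0.
by rewrite msuppX mem_seq1 => /eqP ->; rewrite mnm1E eqSS -sc.
Qed.

Lemma uvarM_at_most_linear c c' : (c != (val t).+1) || (c' != (val t).+1) ->
  uvar n c * uvar n c' \is at_most_linear_in.
Proof.
move=> not_both; apply/allP => m /msuppM_le/allpairsP[[m1 m2] /= []].
move=> /msupp_uvar m1t /msupp_uvar m2t ->.
by rewrite mnmDE m1t m2t; move: not_both; do 2 case: eqP.
Qed.

End AtMostLinear.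

Arguments at_most_linear_in {R n} t.

Lemma cometric_form_uvar_at_most_linear (R : nzRingType) n (t : 'I_n) a b :
  (val t).+2 = n -> (b < n)%N -> cometric_form n (@uvar R n) a b \is at_most_linear_in t.
Proof.
move=> tn b_lt_n; apply/rpredMn/rpredB.
  case: (boolP ((a == (val t).+1) && (b == (val t).+1))) => [/andP[_ /eqP b_eq]|].
    have -> : n%:Z - b%:Z - 1 = 0 by rewrite -tn b_eq; lia.
    by rewrite mulr0 mulr0z rpred0.
  by rewrite negb_and => not_both; apply/rpredMz/uvarM_at_most_linear.
apply: rpred_sum => m _; apply/rpredMz/uvarM_at_most_linear.
by apply/orP; right; have := ltn_ord m; lia.
Qed.

Theorem mainTheorem5 (n : nat) (hn : (2 <= n)%N) :
  (forall i j : nat, (1 <= i <= n)%N -> (1 <= j <= n)%N ->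
    exists G : {mpoly algC[n]},
      (* g^{ij} is a polynomial G in u_1, ..., u_n (variable m of G is u_(m+1)),
         wherever the cometric is defined (all p_k nonzero) *)
      [/\ forall p : 'I_n -> algC, (forall k, p k != 0) ->
            gcomet i j p = G.@[fun m : 'I_n => (uinv n (val m).+1).@[p]],
      (* as a polynomial in p it is homogeneous of degree 2i+2j-4 *)
          (G \mPo u_tuple n) \is (2 * i + 2 * j - 4)%N.-homog
      & (* G depends at most linearly on u_(n-1), i.e. on variable n-2 *)
          forall m, m \in msupp G ->
            forall t : 'I_n, val t = (n - 2)%N -> (m t <= 1)%N]) /\
  (forall p : 'I_n -> algC, (forall k, p k != 0) ->
     gcomet 1 1 p = 4 * (n ^ 2 - n)%:R).
Proof.
split=> [[|a] [|b] // _ /andP[_ b_lt_n] | p p_neq0].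
  exists (cometric_form n (uvar n) a b); split.
  - move=> p p_neq0; rewrite gcomet_offdiag // esym_omit_offdiag.
    rewrite rmorph_cometric_form; apply: eq_cometric_form => c /=.
    by rewrite uvar_eval uinv_eval.
  - rewrite rmorph_cometric_form (eq_cometric_form _ _ _ (@uvar_comp n)).
    have -> : (2 * a.+1 + 2 * b.+1 - 4 = 2 * (a + b))%N by lia.
    exact/cometric_form_homog/uinv_homog.
  - move=> m m_supp t t_val.
    have tn : (val t).+2 = n by lia.
    exact: (allP (cometric_form_uvar_at_most_linear algC a tn b_lt_n)).
rewrite gcomet_offdiag // esym_omit_offdiag /cometric_form big_ord0 esym0.
have n_le_sqn : (n <= n ^ 2)%N by rewrite -mulnn leq_pmulr // ltnW.
by rewrite natrB // natrX; ring.
Qed.
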